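(* Let $O_1$ be an optimal solution of $I_1$ (assumed to exist). Then the optimal cost of the instance $I_2$ is at most $2\,\mathrm{Cost}_{I_1}(O_1)$.
   Context: An instance of LBUBFL with uniform bounds consists of a finite client set $\mathcal C$, a finite facility set $\mathcal F$, a metric $c$ on $\mathcal C\cup\mathcal F$, opening costs $f_i\ge0$, and integers $1\le\mathcal L\le\mathcal U$; a feasible solution opens $\mathcal F'\subseteq\mathcal F$ and assigns clients by $\sigma:\mathcal C\to\mathcal F'$ with $\mathcal L\le|\sigma^{-1}(i)|\le\mathcal U$ for all $i\in\mathcal F'$, at cost $\sum_{i\in\mathcal F'}f_i+\sum_jc(j,\sigma(j))$. Given a nonempty $\mathcal F^t\subseteq\mathcal F$ and an assignment $\sigma^t:\mathcal C\to\mathcal F^t$, the instance $I_1$ is the LBUBFL instance with the same clients, facilities and bounds, in which client $j$ is relocated to the location of $\sigma^t(j)$ (cost of serving $j$ by $i$ is $c(\sigma^t(j),i)$), with opening costs $f^1_i=0$ for $i\in\mathcal F^t$ and $f^1_i=f_i$ otherwise. The instance $I_2$ is the lower-bounded facility location instance (no upper bound) with facility set $\mathcal F^t$, all opening costs $0$, the same relocated clients, and lower bound $\mathcal L$: a feasible solution opens some $\mathcal F''\subseteq\mathcal F^t$ and assigns each client to an opened facility so that every opened facility receives at least $\mathcal L$ clients; its cost is $\sum_jc(\sigma^t(j),\sigma(j))$. *)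

From HB Require Import structures.
From mathcomp Require Import all_boot all_order all_algebra.
Set Implicit Arguments. Unset Strict Implicit. Unset Printing Implicit Defensive.
Import Order.TTheory GRing.Theory Num.Theory.
Local Open Scope ring_scope.

Definition is_metric (R : realFieldType) (P : Type) (d : P -> P -> R) : Prop :=
  [/\ (forall x y, 0 <= d x y),
      (forall x y, d x y = 0 <-> x = y),
      (forall x y, d x y = d y x) &
      (forall x y z, d x z <= d x y + d y z)].

Definition lbub_feasible (C F : finType) (L U : nat)
    (S : {set F}) (sigma : C -> F) : Prop :=
  (forall j, sigma j \in S) /\
  (forall i, i \in S -> (L <= #|[set j | sigma j == i]| <= U)%N).

Definition fl_cost (R : realFieldType) (C F : finType) (f : F -> R)
    (dist : C -> F -> R) (S : {set F}) (sigma : C -> F) : R :=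
  \sum_(i in S) f i + \sum_j dist j (sigma j).

(* Instance I_1: relocated clients, opening costs 0 on Ft. *)
Definition I1_open (R : realFieldType) (F : finType) (f : F -> R)
    (Ft : {set F}) (i : F) : R := if i \in Ft then 0 else f i.

Definition I1_dist (R : realFieldType) (C F : finType)
    (c : (C + F) -> (C + F) -> R) (sigmat : C -> F) (j : C) (i : F) : R :=
  c (inr (sigmat j)) (inr i).

Definition I1_feasible := lbub_feasible.

Definition I1_cost (R : realFieldType) (C F : finType) (c : (C + F) -> (C + F) -> R)
    (f : F -> R) (Ft : {set F}) (sigmat : C -> F) (S : {set F}) (sigma : C -> F) : R :=
  fl_cost (I1_open f Ft) (I1_dist c sigmat) S sigma.

Definition I1_optimal (R : realFieldType) (C F : finType) (c : (C + F) -> (C + F) -> R)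
    (f : F -> R) (L U : nat) (Ft : {set F}) (sigmat : C -> F)
    (S : {set F}) (sigma : C -> F) : Prop :=
  I1_feasible L U S sigma /\
  forall S' sigma', I1_feasible L U S' sigma' ->
    I1_cost c f Ft sigmat S sigma <= I1_cost c f Ft sigmat S' sigma'.

(* Instance I_2: lower-bounded facility location with facility set Ft,
   zero opening costs, relocated clients, lower bound L. *)
Definition I2_feasible (C F : finType) (L : nat) (Ft : {set F})
    (S : {set F}) (sigma : C -> F) : Prop :=
  S \subset Ft /\
  (forall j, sigma j \in S) /\
  (forall i, i \in S -> (L <= #|[set j | sigma j == i]|)%N).

Definition I2_cost (R : realFieldType) (C F : finType) (c : (C + F) -> (C + F) -> R)
    (sigmat : C -> F) (sigma : C -> F) : R :=
  \sum_j c (inr (sigmat j)) (inr (sigma j)).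

From HB Require Import structures.
From mathcomp Require Import all_boot all_order all_algebra.
Import Order.TTheory GRing.Theory Num.Theory.
Local Open Scope ring_scope.

(* Write t_j := sigmat j for the relocated position of client j and
   (S1, sigma1) for O_1.  For every client j, let rep j be the client
   assigned (by sigma1) to the same facility as j whose relocated position is
   closest to that facility; rep j depends only on sigma1 j.  Reassigning
   every client j to t_(rep j) gives a solution of I_2:
   - it opens only points of Ft, and each opened t_(rep j) receives at least
     the whole cluster sigma1^-1(sigma1 j), hence at least L clients;
   - by the triangle inequality through sigma1 j and the choice of rep j,
     c(t_j, t_(rep j)) <= 2 c(t_j, sigma1 j), so its cost is at most twice
     the service cost of O_1, hence at most 2 Cost_{I_1}(O_1) since opening
     costs are nonnegative.
   Finally I_2 has finitely many solutions, so an optimal one exists, and its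
   cost is at most that of the rounded solution. *)

Lemma metric_detour_le {R : realFieldType} {P : Type} (d : P -> P -> R) x y z :
  is_metric d -> d y z <= d y x -> d x z <= 2 * d x y.
Proof.
case=> _ _ dsym dtri yz_le_yx.
apply: (le_trans (dtri x y z)).
by rewrite mulr_natl mulr2n lerD2l (dsym x y).
Qed.

Lemma I1_open_ge0 {R : realFieldType} {F : finType} (f : F -> R) Ft i :
  (forall i, 0 <= f i) -> 0 <= I1_open f Ft i.
Proof. by move=> f_ge0; rewrite /I1_open; case: ifP. Qed.

Section Rounding.

Context {R : realFieldType} {C F : finType}.
Context (c : (C + F) -> (C + F) -> R) {sigmat sigma1 : C -> F}.

Let dist (i : F) (k : C) : R := c (inr (sigmat k)) (inr i).

Definition rep (j : C) : C :=
  Order.arg_min (odflt j [pick k | sigma1 k == sigma1 j])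
    (fun k => sigma1 k == sigma1 j) (dist (sigma1 j)).

Lemma rep_spec j :
  sigma1 (rep j) = sigma1 j /\
  forall k, sigma1 k = sigma1 j -> dist (sigma1 j) (rep j) <= dist (sigma1 j) k.
Proof.
have witness : sigma1 (odflt j [pick k | sigma1 k == sigma1 j]) == sigma1 j.
  by case: pickP => [k //|/(_ j)]; rewrite eqxx.
rewrite /rep; case: arg_minP => // k /eqP k_j k_min.
by split=> // k' /eqP; apply: k_min.
Qed.

Lemma rep_congr j j' : sigma1 j = sigma1 j' -> rep j = rep j'.
Proof.
move=> e; rewrite /rep e.
by case: pickP => [k _ //|/(_ j')]; rewrite eqxx.
Qed.

Definition sigma2 (j : C) : F := sigmat (rep j).

Definition S2 : {set F} := [set sigma2 j | j in C].

(* The rounded solution is feasible for I_2: the facility t_(rep j) receives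
   the whole sigma1-cluster of j, which has at least L clients. *)
Lemma rounded_feasible {L U : nat} {Ft S1 : {set F}} :
  (forall j, sigmat j \in Ft) -> lbub_feasible L U S1 sigma1 ->
  I2_feasible L Ft S2 sigma2.
Proof.
move=> sigmat_Ft [sigma1_S1 S1_bounds]; split; [|split].
- by apply/subsetP=> _ /imsetP [j _ ->]; apply: sigmat_Ft.
- by move=> j; apply/imsetP; exists j.
move=> _ /imsetP [j0 _ ->].
case/andP: (S1_bounds _ (sigma1_S1 j0)) => cluster_ge_L _.
apply: (leq_trans cluster_ge_L); apply: subset_leq_card.
apply/subsetP=> j; rewrite !inE => /eqP same_cluster.
by rewrite /sigma2 (rep_congr _ _ same_cluster).
Qed.

(* Each client pays at most twice its O_1 service cost
   (metric_detour_le through sigma1 j), and opening costs are nonnegative. *)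
Lemma rounded_cost_le {f : F -> R} {Ft S1 : {set F}} :
  is_metric c -> (forall i, 0 <= f i) ->
  I2_cost c sigmat sigma2 <= 2 * I1_cost c f Ft sigmat S1 sigma1.
Proof.
move=> c_metric f_ge0.
rewrite /I1_cost /fl_cost /I2_cost mulrDr.
apply: ler_wpDl; first by rewrite mulr_ge0 // sumr_ge0 // => i _; apply: I1_open_ge0.
rewrite mulr_sumr; apply: ler_sum => j _.
have [_ rep_min] := rep_spec j.
apply: (metric_detour_le c (inr (sigmat j)) (inr (sigma1 j)) _ c_metric).
have [_ _ c_sym _] := c_metric.
by rewrite c_sym [X in _ <= X]c_sym; apply: rep_min.
Qed.

End Rounding.

(* Boolean version of I2_feasible on finite functions, so that the finitely
   many solutions of I_2 can be searched. *)
Definition I2_feasibleb {C F : finType} (L : nat) (Ft S : {set F})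
    (g : {ffun C -> F}) : bool :=
  [&& S \subset Ft, [forall j, g j \in S] &
      [forall i, (i \in S) ==> (L <= #|[set j | g j == i]|)%N]].

Lemma I2_feasibleP {C F : finType} (L : nat) (Ft S : {set F}) (g : {ffun C -> F}) :
  reflect (I2_feasible L Ft S g) (I2_feasibleb L Ft S g).
Proof.
apply: (iffP and3P) => [[S_Ft /forallP g_S /forallP S_L]|[S_Ft [g_S S_L]]].
  by split=> //; split=> // i iS; move/implyP: (S_L i); apply.
split=> //; first exact/forallP.
by apply/forallP=> i; apply/implyP; apply: S_L.
Qed.

Lemma I2_feasible_ext {C F : finType} (L : nat) (Ft S : {set F}) (sigma sigma' : C -> F) :
  sigma =1 sigma' -> I2_feasible L Ft S sigma -> I2_feasible L Ft S sigma'.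
Proof.
move=> e [S_Ft [sigma_S S_L]]; split=> //; split=> [j|i iS]; first by rewrite -e.
have -> : [set j | sigma' j == i] = [set j | sigma j == i].
  by apply/setP=> j; rewrite !inE e.
exact: S_L.
Qed.

Lemma I2_cost_ext {R : realFieldType} {C F : finType} (c : (C + F) -> (C + F) -> R)
    (sigmat sigma sigma' : C -> F) :
  sigma =1 sigma' -> I2_cost c sigmat sigma = I2_cost c sigmat sigma'.
Proof. by move=> e; apply: eq_bigr => j _; rewrite e. Qed.

(* A feasible instance of I_2 has an optimal solution, no worse than any
   given feasible one: minimize over the finite type of pairs (S, g). *)
Lemma I2_optimum_exists {R : realFieldType} {C F : finType}
    (c : (C + F) -> (C + F) -> R) (sigmat : C -> F) {L : nat} {Ft S : {set F}}
    {sigma : C -> F} :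
  I2_feasible L Ft S sigma ->
  exists (So : {set F}) (sigmao : C -> F),
    [/\ I2_feasible L Ft So sigmao,
        (forall S' sigma', I2_feasible L Ft S' sigma' ->
           I2_cost c sigmat sigmao <= I2_cost c sigmat sigma') &
        I2_cost c sigmat sigmao <= I2_cost c sigmat sigma].
Proof.
pose tab (sigma' : C -> F) : {ffun C -> F} := [ffun j => sigma' j].
have tabE sigma' : sigma' =1 tab sigma' by move=> j; rewrite ffunE.
pose feasible (p : {set F} * {ffun C -> F}) := I2_feasibleb L Ft p.1 p.2.
pose cost (p : {set F} * {ffun C -> F}) := I2_cost c sigmat p.2.
have feasible_tab S' sigma' : I2_feasible L Ft S' sigma' -> feasible (S', tab sigma').
  by move=> feas'; apply/I2_feasibleP; apply: I2_feasible_ext feas'.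
move=> /feasible_tab feas0.
case: (arg_minP cost feas0) => [[So g] /I2_feasibleP feas_o min_o].
have cost_tab S' sigma' : cost (S', tab sigma') = I2_cost c sigmat sigma'.
  by apply/esym/I2_cost_ext/tabE.
exists So, g; split=> //.
- by move=> S' sigma' /feasible_tab /min_o; rewrite cost_tab.
- by have := min_o _ feas0; rewrite cost_tab.
Qed.

Theorem lemma3p2 (R : realFieldType) (C F : finType)
    (c : (C + F) -> (C + F) -> R) (f : F -> R) (L U : nat)
    (Ft : {set F}) (sigmat : C -> F) (S1 : {set F}) (sigma1 : C -> F) :
  is_metric c ->
  (forall i, 0 <= f i) ->
  (1 <= L)%N -> (L <= U)%N ->
  Ft != set0 ->
  (forall j, sigmat j \in Ft) ->
  I1_optimal c f L U Ft sigmat S1 sigma1 ->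
  exists (S2 : {set F}) (sigma2 : C -> F),
    [/\ I2_feasible L Ft S2 sigma2,
        (forall S' sigma', I2_feasible L Ft S' sigma' ->
           I2_cost c sigmat sigma2 <= I2_cost c sigmat sigma') &
        I2_cost c sigmat sigma2 <= 2 * I1_cost c f Ft sigmat S1 sigma1].
Proof.
move=> c_metric f_ge0 _ _ _ sigmat_Ft [O1_feasible _].
have rounded := rounded_feasible c sigmat_Ft O1_feasible.
have [S2o [sigma2o [feas opt le_rounded]]] := I2_optimum_exists c sigmat rounded.
exists S2o, sigma2o; split=> //.
by apply: (le_trans le_rounded); apply: rounded_cost_le.
Qed.
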